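(* Let $G$ be a finite group and $E$ a $k^G$-comodule algebra. The map $c$ sending a $(k^G,E)$-Hopf torsor $T$ to the isomorphism class $[T^\times]$ of the $(G,E^\times)$-group torsor $T^\times$ induces a bijection of pointed sets $\mathcal{T}ors(k^G,E)\cong\mathrm{Tors}(G,E^\times)$.
   Context: $k^G$: Hopf algebra with $k$-basis $\{\delta_g\}$, $\delta_g\delta_{g'}=\partial_{g,g'}\delta_g$, unit $\sum_g\delta_g$, $\Delta(\delta_g)=\sum_{ab=g}\delta_a\otimes\delta_b$, $\varepsilon(\delta_g)=\partial_{g,e}$, $\sigma(\delta_g)=\delta_{g^{-1}}$. $E$ is a $k^G$-comodule algebra (coaction an algebra map) with $G$-action $\Delta_E(x)=\sum_g{}^gx\otimes\delta_g$ on $E^\times$. A $(k^G,E)$-Hopf module $T$ is a right $E$-module with coaction $\Delta_T(tx)=\Delta_T(t)\Delta_E(x)$, and $\Delta_T(u)=\sum_g{}^gu\otimes\delta_g$ gives a $G$-action on $T$. $T^\times=\{u:\ x\mapsto ux,\ E\to T\text{ bijective}\}$ (analogously $(T\otimes H)^\times$ over $E\otimes H$), $T^\bullet=\{u\in T^\times:\Delta_T(u)\in(T\otimes H)^\times\}$; a Hopf torsor is a Hopf module with $T^\bullet\ne\emptyset$; $\mathcal{T}ors(k^G,E)$ is the set of isomorphism classes (as Hopf modules) of Hopf torsors, pointed by $(E,\Delta_E)$. For $T$ a Hopf torsor, $T^\times$ with the restricted $G$-action and right $E^\times$-multiplication is a $(G,E^\times)$-group torsor (a nonempty left $G$-set with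 compatible, simply transitive right $E^\times$-action, ${}^g(pa)={}^gp\,{}^ga$). $\mathrm{Tors}(G,E^\times)$ is the set of isomorphism classes of $(G,E^\times)$-group torsors, pointed by the class of $E^\times$. *)

From HB Require Import structures.
From mathcomp Require Import all_boot all_order all_algebra all_fingroup.
Set Implicit Arguments. Unset Strict Implicit. Unset Printing Implicit Defensive.
Import GRing.Theory.
Local Open Scope ring_scope.

(* Conventions.
   * k^G is free on the basis (delta_g), so an element  sum_g x_g (x) delta_g
     of  M (x) k^G  is encoded by its coefficient function  g |-> x_g : G -> M.
     With this encoding the algebra E (x) k^G is the product algebra E^G
     (pointwise operations, since delta_g delta_h = [g=h] delta_g and the unit
     is sum_g delta_g).
   * A coaction  Delta : M -> M (x) k^G  is thus a map  rho : M -> G -> M, and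
     Delta(x) = sum_g rho x g (x) delta_g, i.e.  rho x g = {}^g x.
   * Coassociativity  (Delta (x) id) Delta = (id (x) Delta_{k^G}) Delta  reads,
     on the coefficient of delta_a (x) delta_b:  rho (rho x b) a = rho x (a*b);
     counitality (id (x) eps) Delta = id reads  rho x 1 = x.
   * A right E-module T over the k-algebra E is a k-module with a
     k-bilinear right action  act : T -> E -> T. *)

Section Defs.
Variables (k : fieldType) (G : finGroupType) (E : unitAlgType k).

Definition is_comodule_algebra (rho : E -> G -> E) : Prop :=
  [/\ (forall (a : k) (x y : E) (g : G), rho (a *: x + y) g = a *: rho x g + rho y g),
      (forall (x : E) (a b : G), rho (rho x b) a = rho x (a * b)%g),
      (forall x : E, rho x 1%g = x),
      (forall (x y : E) (g : G), rho (x * y) g = rho x g * rho y g) &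
      (forall g : G, rho 1 g = 1)].

Definition is_hopf_module (rhoE : E -> G -> E) (T : lmodType k)
    (act : T -> E -> T) (rhoT : T -> G -> T) : Prop :=
  (((forall (t s : T) (x : E), act (t + s) x = act t x + act s x)) /\
  ((forall (t : T) (x y : E), act t (x + y) = act t x + act t y)) /\
  ((forall (a : k) (t : T) (x : E),
          act (a *: t) x = a *: act t x /\ act t (a *: x) = a *: act t x)) /\
  ((forall t : T, act t 1 = t)) /\
  ((forall (t : T) (x y : E), act (act t x) y = act t (x * y))) /\
  ((forall (a : k) (t s : T) (g : G), rhoT (a *: t + s) g = a *: rhoT t g + rhoT s g)) /\
  ((forall (t : T) (a b : G), rhoT (rhoT t b) a = rhoT t (a * b)%g)) /\
  ((forall t : T, rhoT t 1%g = t)) /\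
  ((forall (t : T) (x : E) (g : G), rhoT (act t x) g = act (rhoT t g) (rhoE x g)))).

Definition Tunit (T : Type) (act : T -> E -> T) (u : T) : Prop :=
  bijective (fun x : E => act u x).

(* T^bullet = { u in T^x | Delta_T(u) in (T (x) k^G)^x }, where
   (T (x) k^G)^x is taken over E (x) k^G, acting componentwise. *)
Definition Tbullet (T : Type) (act : T -> E -> T) (rhoT : T -> G -> T) (u : T) : Prop :=
  Tunit act u /\
  bijective (fun f : {ffun G -> E} => [ffun g => act (rhoT u g) (f g)] : {ffun G -> T}).

Definition is_hopf_torsor (rhoE : E -> G -> E) (T : lmodType k)
    (act : T -> E -> T) (rhoT : T -> G -> T) : Prop :=
  is_hopf_module rhoE act rhoT /\ exists u : T, Tbullet act rhoT u.

Definition hopf_iso (T T' : lmodType k) (act : T -> E -> T) (rhoT : T -> G -> T)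
    (act' : T' -> E -> T') (rhoT' : T' -> G -> T') (f : T -> T') : Prop :=
  [/\ bijective f,
      (forall (a : k) (t s : T), f (a *: t + s) = a *: f t + f s),
      (forall (t : T) (x : E), f (act t x) = act' (f t) x) &
      (forall (t : T) (g : G), f (rhoT t g) = rhoT' (f t) g)].

(* A torsor is a set, given as a subset S of an
   ambient type P, with a left G-action gact and a right action ract of the
   group E^x = { x : E | x unit } (ract p a is only relevant for units a);
   the G-action on E^x is the restriction of the G-action a |-> rhoE a g. *)
Definition is_group_torsor (rhoE : E -> G -> E) (P : Type) (S : P -> Prop)
    (gact : G -> P -> P) (ract : P -> E -> P) : Prop :=
  (((exists p, S p)) /\
  ((forall g p, S p -> S (gact g p))) /\
  ((forall p a, S p -> a \is a GRing.unit -> S (ract p a))) /\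
  ((forall p, S p -> gact 1%g p = p)) /\
  ((forall g h p, S p -> gact (g * h)%g p = gact g (gact h p))) /\
  ((forall p, S p -> ract p 1 = p)) /\
  ((forall p a b, S p -> a \is a GRing.unit -> b \is a GRing.unit ->
          ract (ract p a) b = ract p (a * b))) /\
  ((forall g p a, S p -> a \is a GRing.unit ->
          gact g (ract p a) = ract (gact g p) (rhoE a g))) /\
  ((forall p q, S p -> S q ->
          exists a, [/\ a \is a GRing.unit, ract p a = q &
            forall b, b \is a GRing.unit -> ract p b = q -> b = a]))).

Definition torsor_iso (P : Type) (S : P -> Prop) (gact : G -> P -> P) (ract : P -> E -> P)
    (P' : Type) (S' : P' -> Prop) (gact' : G -> P' -> P') (ract' : P' -> E -> P')
    (f : P -> P') : Prop :=
  [/\ (forall p, S p -> S' (f p)),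
      (forall p q, S p -> S q -> f p = f q -> p = q),
      (forall p', S' p' -> exists2 p, S p & f p = p'),
      (forall g p, S p -> f (gact g p) = gact' g (f p)) &
      (forall p a, S p -> a \is a GRing.unit -> f (ract p a) = ract' (f p) a)].

Definition c_torsor_iso (T : lmodType k) (act : T -> E -> T) (rhoT : T -> G -> T)
    (P : Type) (S : P -> Prop) (gact : G -> P -> P) (ract : P -> E -> P) : Prop :=
  exists f, torsor_iso (Tunit act) (fun g u => rhoT u g) act S gact ract f.

End Defs.

From HB Require Import structures.
From mathcomp Require Import all_boot all_order all_algebra all_fingroup.
From Stdlib Require Import ClassicalEpsilon FunctionalExtensionality PropExtensionality.
Set Implicit Arguments. Unset Strict Implicit. Unset Printing Implicit Defensive.
Import GRing.Theory.
Local Open Scope ring_scope.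

(* Everything rests on one elementary observation: if E acts on the right of a
   set T (associatively and unitally), the elements u of T^x, those for which
   x |-> u x is a bijection E -> T, form a torsor under the unit group E^x
   (Tunit_torsor).  From it:
   - for a Hopf torsor T, the G-action t |-> {}^g t preserves T^x, since
     {}^g (u a) = {}^g u {}^g a with {}^g u in T^x for u in T^bullet; so T^x is a
     (G, E^x)-group torsor (hopf_torsor_group_torsor);
   - Hopf module isomorphisms restrict to torsor isomorphisms, and conversely
     a torsor isomorphism f : T^x -> T'^x extends to the E-linear map
     u x |-> f(u) x, which is colinear (torsor_iso_hopf_iso);
   - a group torsor P with a point p0 defines a 1-cocycle c by p0 c(g) = g p0,
     and E with the coaction twisted by c is a Hopf torsor whose units
     realize P (group_torsor_realized).
   The base points correspond because Delta_E is the twist by the trivial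
   cocycle and E^x is exactly the set of units of E acting on itself. *)

Section RegularElements.
Variables (k : fieldType) (E : unitAlgType k) (T : Type) (act : T -> E -> T).

Lemma Tunit_inj u x y : Tunit act u -> act u x = act u y -> x = y.
Proof. by case=> g gK _ e; rewrite -(gK x) -(gK y) /= e. Qed.

Lemma Tunit_surj u t : Tunit act u -> exists x, act u x = t.
Proof. by case=> g _ Kg; exists (g t); rewrite Kg. Qed.

Hypotheses (actA : forall t x y, act (act t x) y = act t (x * y))
           (act1 : forall t, act t 1 = t).

Lemma Tunit_ract u a : Tunit act u -> a \is a GRing.unit -> Tunit act (act u a).
Proof.
case=> g gK Kg ua; exists (fun t => a^-1 * g t) => [x|t] /=.
  by rewrite actA gK mulKr.
by rewrite actA mulrA mulrV // mul1r Kg.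
Qed.

Lemma Tunit_torsor p q : Tunit act p -> Tunit act q ->
  exists a, [/\ a \is a GRing.unit, act p a = q &
                forall b, b \is a GRing.unit -> act p b = q -> b = a].
Proof.
move=> Tp Tq; have [a pa] := Tunit_surj q Tp; have [b qb] := Tunit_surj p Tq.
exists a; split=> // [|c _ pc]; last by apply: (Tunit_inj Tp); rewrite pa pc.
apply/unitrP; exists b; split.
  by apply: (Tunit_inj Tq); rewrite -actA qb pa act1.
by apply: (Tunit_inj Tp); rewrite -actA pa qb act1.
Qed.

End RegularElements.

Lemma Tunit_mulE (k : fieldType) (E : unitAlgType k) :
  Tunit ( *%R) = (fun a : E => a \is a GRing.unit).
Proof.
have mul_actA : forall x y z : E, x * y * z = x * (y * z) by move=> x y z; rewrite mulrA.
have T1 : Tunit ( *%R) (1 : E) by exists id => x; rewrite /= mul1r.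
apply: functional_extensionality => a; apply: propositional_extensionality.
split=> [Ta|ua]; last by have := Tunit_ract mul_actA T1 ua; rewrite mul1r.
by have [b [ub <- _]] := Tunit_torsor mul_actA (@mulr1 E) T1 Ta; rewrite mul1r.
Qed.

(* The G-action of a comodule algebra is by ring maps, so it preserves E^x. *)
Lemma comodule_unit (k : fieldType) (G : finGroupType) (E : unitAlgType k)
    (rhoE : E -> G -> E) (a : E) (g : G) :
  is_comodule_algebra rhoE -> a \is a GRing.unit -> rhoE a g \is a GRing.unit.
Proof.
case=> _ _ _ rhoM rho1 /unitrP[b [ba ab]]; apply/unitrP; exists (rhoE b g).
by rewrite -!rhoM ba ab rho1.
Qed.

(* A map acting componentwise on finite families is bijective only if each
   component is; this reads T^bullet in terms of T^x. *)
Lemma componentwise_bijective (I : finType) (A B : Type) (phi : I -> A -> B) (i : I) :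
  bijective (fun f : {ffun I -> A} => [ffun j => phi j (f j)] : {ffun I -> B}) ->
  bijective (phi i).
Proof.
case=> F FK KF.
have phi_inj : injective (phi i).
  move=> x y e; pose f z := [ffun j => if j == i then z else y].
  have : [ffun j => phi j (f x j)] = [ffun j => phi j (f y j)].
    by apply/ffunP => j; rewrite !ffunE; case: eqP => // ->.
  by move/(congr1 F); rewrite !FK => /(congr1 (fun h : {ffun I -> A} => h i)); rewrite !ffunE eqxx.
have phiF b : phi i (F [ffun=> b] i) = b.
  by have := congr1 (fun h : {ffun I -> B} => h i) (KF [ffun=> b]); rewrite /= !ffunE.
by exists (fun b => F [ffun=> b] i) => [x|b] //; apply: phi_inj; rewrite phiF.
Qed.

Section HopfTorsorUnits.
Variables (k : fieldType) (G : finGroupType) (E : unitAlgType k) (rhoE : E -> G -> E).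
Hypothesis comodE : is_comodule_algebra rhoE.

Lemma Tbullet_coef (T : Type) (act : T -> E -> T) (rhoT : T -> G -> T) u g :
  Tbullet act rhoT u -> Tunit act (rhoT u g).
Proof. by case=> _; exact: (@componentwise_bijective _ _ _ (fun g => act (rhoT u g))). Qed.

Lemma hopf_torsor_group_torsor (T : lmodType k) (act : T -> E -> T) (rhoT : T -> G -> T) :
  is_hopf_torsor rhoE act rhoT ->
  is_group_torsor rhoE (Tunit act) (fun g u => rhoT u g) act.
Proof.
move=> [[_ [_ [_ [act1 [actA [_ [rhoA [rho1 rhoAct]]]]]]]] [u bu]].
have Tu : Tunit act u by case: bu.
have coact_unit g p : Tunit act p -> Tunit act (rhoT p g).
  move=> Tp; have [a [ua <- _]] := Tunit_torsor actA act1 Tu Tp.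
  rewrite rhoAct; apply: Tunit_ract => //; first exact: Tbullet_coef bu.
  exact: comodule_unit.
split; first by exists u.
split; first by move=> g p; apply: coact_unit.
split; first by move=> p a Tp ua; apply: Tunit_ract.
split; first by move=> p _; apply: rho1.
split; first by move=> g h p _; rewrite rhoA.
split; first by move=> p _; apply: act1.
split; first by move=> p a b _ _ _; apply: actA.
split; first by move=> g p a _ _; apply: rhoAct.
by move=> p q Tp Tq; apply: Tunit_torsor.
Qed.

Lemma hopf_iso_torsor_iso (T : lmodType k) (act : T -> E -> T) (rhoT : T -> G -> T)
    (T' : lmodType k) (act' : T' -> E -> T') (rhoT' : T' -> G -> T') (f : T -> T') :
  hopf_iso act rhoT act' rhoT' f ->
  torsor_iso (Tunit act) (fun g u => rhoT u g) act
             (Tunit act') (fun g u => rhoT' u g) act' f.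
Proof.
case=> bij_f _ f_act f_rho; have [f' fK f'K] := bij_f.
have bij_f' : bijective f' by exists f.
split=> [p Tp|p q _ _ fpq|p' Tp'|g p _|p a _ _] //.
- by apply: (eq_bij (bij_comp bij_f Tp)) => x /=; rewrite f_act.
- by rewrite -(fK p) fpq fK.
- exists (f' p') => //; apply: (eq_bij (bij_comp bij_f' Tp')) => x /=.
  by rewrite -{1}(f'K p') -f_act fK.
Qed.

(* Conversely, fixing u in T^bullet, a torsor isomorphism f extends to the
   Hopf module isomorphism u x |-> f(u) x; colinearity follows from
   {}^g u = u a and f({}^g u) = {}^g f(u). *)
Lemma torsor_iso_hopf_iso (T : lmodType k) (act : T -> E -> T) (rhoT : T -> G -> T)
    (T' : lmodType k) (act' : T' -> E -> T') (rhoT' : T' -> G -> T') :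
  is_hopf_torsor rhoE act rhoT -> is_hopf_torsor rhoE act' rhoT' ->
  c_torsor_iso act rhoT (Tunit act') (fun g u => rhoT' u g) act' ->
  exists f, hopf_iso act rhoT act' rhoT' f.
Proof.
move=> hT hT' [f [f_unit _ _ f_rho f_act]].
have [_ [rho_unit _]] := hopf_torsor_group_torsor hT.
case: hT => [[_ [actDr [actZ [act1 [actA [_ [_ [_ rhoAct]]]]]]]] [u [Tu _]]].
case: hT' => [[_ [actDr' [actZ' [_ [actA' [_ [_ [_ rhoAct']]]]]]]] _].
have [coord uK Kcoord] := Tu.
have bij_coord : bijective coord by exists (act u).
have coordD a t s : coord (a *: t + s) = a *: coord t + coord s.
  by apply: (Tunit_inj Tu); rewrite actDr (proj2 (actZ _ _ _)) !Kcoord.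
have coordM t x : coord (act t x) = coord t * x.
  by apply: (Tunit_inj Tu); rewrite -actA !Kcoord.
exists (fun t => act' (f u) (coord t)); split.
- exact: bij_comp (f_unit _ Tu) bij_coord.
- by move=> a t s; rewrite coordD actDr' (proj2 (actZ' _ _ _)).
- by move=> t x; rewrite coordM actA'.
move=> t g; have [a [ua ea _]] := Tunit_torsor actA act1 Tu (rho_unit g u Tu).
by rewrite -{1}(Kcoord t) rhoAct -ea actA uK -actA' -f_act // ea f_rho // rhoAct'.
Qed.

End HopfTorsorUnits.

Section CocycleTwist.
Variables (k : fieldType) (G : finGroupType) (E : unitAlgType k) (rhoE : E -> G -> E).
Hypothesis comodE : is_comodule_algebra rhoE.

Definition is_cocycle (c : G -> E) : Prop :=
  [/\ forall g, c g \is a GRing.unit, c 1%g = 1 &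
      forall a b, c (a * b)%g = c a * rhoE (c b) a].

Definition twisted_coaction (c : G -> E) (x : E) (g : G) : E := c g * rhoE x g.

Lemma twisted_hopf_torsor (c : G -> E) :
  is_cocycle c -> is_hopf_torsor rhoE (T := E) ( *%R) (twisted_coaction c).
Proof.
case: comodE => rhoL rhoA rho1 rhoM rhoE1 [c_unit c1 cM]; rewrite /twisted_coaction.
split; last first.
  exists 1; split; first by rewrite Tunit_mulE unitr1.
  exists (fun f : {ffun G -> E} => [ffun g => (c g)^-1 * f g]) => f;
    by apply/ffunP => g; rewrite !ffunE rhoE1 mulr1 ?mulKr ?mulrA ?mulrV ?mul1r.
split; first by move=> *; rewrite mulrDl.
split; first by move=> *; rewrite mulrDr.
split; first by move=> *; rewrite -scalerAl -scalerAr.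
split; first by move=> *; rewrite mulr1.
split; first by move=> *; rewrite mulrA.
split; first by move=> *; rewrite rhoL mulrDr -scalerAr.
split; first by move=> t a b; rewrite rhoM rhoA mulrA cM.
split; first by move=> t; rewrite rho1 c1 mul1r.
by move=> t x g; rewrite rhoM mulrA.
Qed.

Lemma trivial_cocycle : is_cocycle (fun _ => 1).
Proof. by case: comodE => _ _ _ _ rhoE1; split=> // [g|a b]; rewrite ?unitr1 ?rhoE1 ?mulr1. Qed.

Lemma twisted_coaction1 : twisted_coaction (fun _ => 1) = rhoE.
Proof.
by apply: functional_extensionality => x; apply: functional_extensionality => g;
   rewrite /twisted_coaction mul1r.
Qed.

Variables (P : Type) (S : P -> Prop) (gact : G -> P -> P) (ract : P -> E -> P).
Hypothesis torsorS : is_group_torsor rhoE S gact ract.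

Lemma group_torsor_cocycle p0 : S p0 ->
  exists c, is_cocycle c /\ forall g, ract p0 (c g) = gact g p0.
Proof.
case: torsorS => _ [gactS [ractS [gact1 [gactM [ract1 [ractM [gact_ract regular]]]]]]].
move=> Sp0; have choice_c g : exists a, a \is a GRing.unit /\ ract p0 a = gact g p0.
  by have [a [ua pa _]] := regular _ _ Sp0 (gactS g _ Sp0); exists a.
pose c g := proj1_sig (constructive_indefinite_description _ (choice_c g)).
have [c_unit c_def] : (forall g, c g \is a GRing.unit) /\ (forall g, ract p0 (c g) = gact g p0).
  by split=> g; rewrite /c; case: constructive_indefinite_description => ? [].
have coordinate_uniq q a b : S q -> a \is a GRing.unit -> b \is a GRing.unit ->
    ract p0 a = q -> ract p0 b = q -> a = b.
  move=> Sq ua ub pa pb; have [e [_ _ uniq_e]] := regular _ _ Sp0 Sq.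
  by rewrite (uniq_e _ ua pa) (uniq_e _ ub pb).
exists c; split=> //; split=> // [|a b].
  by apply: (coordinate_uniq p0); rewrite ?unitr1 ?c_def ?gact1 ?ract1.
apply: (coordinate_uniq (gact (a * b)%g p0)); rewrite ?c_def ?unitrMl ?comodule_unit //.
  exact: gactS.
by rewrite -ractM ?comodule_unit // c_def -gact_ract // c_def -gactM.
Qed.

Lemma group_torsor_realized :
  exists (T : lmodType k) (act : T -> E -> T) (rhoT : T -> G -> T),
    is_hopf_torsor rhoE act rhoT /\ c_torsor_iso act rhoT S gact ract.
Proof.
have [p0 Sp0] := proj1 torsorS.
have [c [cocycle_c c_def]] := group_torsor_cocycle Sp0.
case: torsorS => _ [_ [ractS [_ [_ [_ [ractM [gact_ract regular]]]]]]].
exists E, ( *%R), (twisted_coaction c); split; first exact: twisted_hopf_torsor.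
case: cocycle_c => c_unit _ _; rewrite /c_torsor_iso Tunit_mulE /twisted_coaction.
exists (ract p0); split=> [x ux|x y ux uy pxy|q Sq|g x ux|x a ux ua].
- exact: ractS.
- have [e [_ _ uniq_e]] := regular _ _ Sp0 (ractS _ _ Sp0 uy).
  by rewrite (uniq_e _ ux pxy) (uniq_e _ uy erefl).
- by have [a [ua pa _]] := regular _ _ Sp0 Sq; exists a.
- by rewrite -ractM ?comodule_unit // c_def gact_ract.
- by rewrite ractM.
Qed.

End CocycleTwist.

Theorem corollary3p8 (k : fieldType) (G : finGroupType) (E : unitAlgType k)
    (rhoE : E -> G -> E) :
  is_comodule_algebra rhoE ->
  [/\
   (* c is well defined: T^x is a (G,E^x)-group torsor ... *)
   (forall (T : lmodType k) (act : T -> E -> T) (rhoT : T -> G -> T),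
      is_hopf_torsor rhoE act rhoT ->
      is_group_torsor rhoE (Tunit act) (fun g u => rhoT u g) act),
   (* ... and isomorphic Hopf torsors give isomorphic group torsors; *)
   (forall (T : lmodType k) (act : T -> E -> T) (rhoT : T -> G -> T)
           (T' : lmodType k) (act' : T' -> E -> T') (rhoT' : T' -> G -> T'),
      is_hopf_torsor rhoE act rhoT -> is_hopf_torsor rhoE act' rhoT' ->
      (exists f, hopf_iso act rhoT act' rhoT' f) ->
      c_torsor_iso act rhoT (Tunit act') (fun g u => rhoT' u g) act'),
   (* the induced map on isomorphism classes is injective; *)
   (forall (T : lmodType k) (act : T -> E -> T) (rhoT : T -> G -> T)
           (T' : lmodType k) (act' : T' -> E -> T') (rhoT' : T' -> G -> T'),
      is_hopf_torsor rhoE act rhoT -> is_hopf_torsor rhoE act' rhoT' ->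
      c_torsor_iso act rhoT (Tunit act') (fun g u => rhoT' u g) act' ->
      exists f, hopf_iso act rhoT act' rhoT' f),
   (* it is surjective; *)
   (forall (P : Type) (S : P -> Prop) (gact : G -> P -> P) (ract : P -> E -> P),
      is_group_torsor rhoE S gact ract ->
      exists (T : lmodType k) (act : T -> E -> T) (rhoT : T -> G -> T),
        is_hopf_torsor rhoE act rhoT /\ c_torsor_iso act rhoT S gact ract) &
   (* and it preserves base points: (E, Delta_E) is a Hopf torsor, E^x is a
      group torsor, and c([E]) = [E^x]. *)
   [/\ is_hopf_torsor rhoE (T := E) ( *%R) rhoE,
       is_group_torsor rhoE (fun x : E => x \is a GRing.unit) (fun g x => rhoE x g) ( *%R) &
       c_torsor_iso (T := E) ( *%R) rhoE
         (fun x : E => x \is a GRing.unit) (fun g x => rhoE x g) ( *%R)]].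
Proof.
move=> comodE; have base := twisted_hopf_torsor comodE (trivial_cocycle comodE).
rewrite twisted_coaction1 in base.
split.
- by move=> T act rhoT; apply: hopf_torsor_group_torsor.
- by move=> T act rhoT T' act' rhoT' _ _ [f iso_f]; exists f; apply: hopf_iso_torsor_iso.
- by move=> T act rhoT T' act' rhoT'; apply: torsor_iso_hopf_iso.
- by move=> P S gact ract; apply: group_torsor_realized.
split=> //; rewrite -Tunit_mulE; first exact: hopf_torsor_group_torsor.
by exists id; split=> // p' Tp'; exists p'.
Qed.
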